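(* Any decomposable sum-product network (SPN) can be represented by a stochastic context-free And-Or grammar whose size is linear in the size of the SPN, in the sense that for every assignment to the random variables, the marginal probability computed by the And-Or grammar equals the probability computed by the SPN.
   Context: A sum-product network over random variables $x_1,\dots,x_d$ is a rooted directed acyclic graph whose leaves are indicators $x_i$ or $\bar x_i$ and whose non-leaf nodes are sum nodes (computing a weighted sum of their children) or product nodes (computing the product of their children); its value is that of its root. The scope of a node is the set of variables appearing in its descendant leaves. For validity, children of a sum node have identical scopes and children of a product node contain no conflicting leaves ($x_i$ in one, $\bar x_i$ in another). An SPN is decomposable if the children of every product node have disjoint scopes. The probability computed by the SPN refers to its (normalized) distribution. A stochastic context-free And-Or grammar (AOG) is a tuple $\langle \Sigma, N, S, \theta, R\rangle$: terminal nodes $\Sigma$; nonterminal nodes $N$ partitioned into And-nodes and Or-nodes; start symbol $S$; $\theta$ maps each instance of a node $x$ to a parameter $\theta_x$; $R$ is partitioned into And-rules and Or-rules. An And-rule $\langle A\to\{x_1,\dots,x_n\}, t, f\rangle$ ($n\ge2$) has a parameter relation $t(\theta_{x_1},\dots,\theta_{x_n})$ and parameter function $\theta_A=f(\theta_{x_1},\dots,\theta_{x_n})$; each And-node heads exactly one And-rule. An Or-rule $\langle O\to x, p\rangle$ has conditional probability $p$ and requires $\theta_O=\theta_x$. A parse of a data sample (a set of terminal instances) is a tree rooted at an instance of $S$ with leaves exactly the sample, And-node instances expanded by their And-rule subject to the parameter relation/function, Or-node instances by exactly one Or-rule with equal parameter; its probability is the product of used Or-rule probabilities, and the marginal probability of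 a sample is the sum over its parses. *)

From HB Require Import structures.
From mathcomp Require Import all_boot all_order all_algebra.
From Stdlib Require List Permutation.
Set Implicit Arguments. Unset Strict Implicit. Unset Printing Implicit Defensive.
Import Order.TTheory GRing.Theory Num.Theory.
Local Open Scope ring_scope.

(* An SPN is a list of nodes in topological order; children of node k  *)
(* are referred to by their (nat) index, which must be < k.  The root  *)
(* is the last node.                                                    *)

Inductive snode (d : nat) (R : Type) :=
  | SLeaf of 'I_d & bool                 (* SLeaf i true = x_i, SLeaf i false = \bar x_i *)
  | SSum of seq (nat * R)               (* (child index, weight) *)
  | SProd of seq nat.

Definition spn (d : nat) (R : Type) := seq (snode d R).

Section SPN.
Variables (d : nat) (R : realFieldType).
Implicit Types (S : spn d R) (x : {ffun 'I_d -> bool}).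

Definition node_children (n : snode d R) : seq nat :=
  match n with
  | SLeaf _ _ => [::]
  | SSum ch => map fst ch
  | SProd ch => ch
  end.

Definition wf_spn S : Prop :=
  (0 < size S)%N /\
  forall k, (k < size S)%N ->
    match nth (SProd d R [::]) S k with
    | SLeaf _ _ => True
    | SSum ch => (0 < size ch)%N /\ all (fun c => c.1 < k)%N ch /\ all (fun c => 0 < c.2) ch
    | SProd ch => (0 < size ch)%N /\ all (fun c => c < k)%N ch
    end.

Definition node_val x (vs : seq R) (n : snode d R) : R :=
  match n with
  | SLeaf i b => (x i == b)%:R
  | SSum ch => \sum_(c <- ch) c.2 * nth 0 vs c.1
  | SProd ch => \prod_(c <- ch) nth 0 vs c
  end.

Definition node_vals S x : seq R :=
  foldl (fun vs n => rcons vs (node_val x vs n)) [::] S.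

Definition spn_val S x : R := last 0 (node_vals S x).

Definition spn_prob S x : R :=
  spn_val S x / \sum_(y : {ffun 'I_d -> bool}) spn_val S y.

Definition node_scope (ss : seq {set 'I_d}) (n : snode d R) : {set 'I_d} :=
  match n with
  | SLeaf i _ => [set i]
  | _ => \bigcup_(c <- node_children n) nth set0 ss c
  end.

Definition scopes S : seq {set 'I_d} :=
  foldl (fun ss n => rcons ss (node_scope ss n)) [::] S.

Definition scope_of S (k : nat) : {set 'I_d} := nth set0 (scopes S) k.

Definition complete_spn S : Prop :=
  forall k, (k < size S)%N ->
    match nth (SProd d R [::]) S k with
    | SSum ch => forall c1 c2, c1 \in ch -> c2 \in ch ->
                   scope_of S c1.1 = scope_of S c2.1
    | _ => True
    end.

Definition decomposable_spn S : Prop :=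
  forall k, (k < size S)%N ->
    match nth (SProd d R [::]) S k with
    | SProd ch => forall j1 j2, (j1 < size ch)%N -> (j2 < size ch)%N -> j1 <> j2 ->
                   [disjoint scope_of S (nth 0%N ch j1) & scope_of S (nth 0%N ch j2)]
    | _ => True
    end.

Definition full_scope_spn S : Prop := scope_of S (size S).-1 = setT.

Definition spn_size S : nat := size S + \sum_(n <- S) size (node_children n).

End SPN.

(* Terminal nodes are naturals 0..nterm-1, nonterminals 0..nnt-1;       *)
(* a symbol is inl a (terminal a) or inr k (nonterminal k).             *)
(* Each And-node k heads exactly one And-rule k -> and_ch k with        *)
(* parameter relation and_rel k and parameter function and_fun k.       *)
(* Or-rules are triples (O, x, p) : O -> x with probability p.           *)

Definition symbol := (nat + nat)%type.

Record aog (P : Type) (R : realFieldType) := AOG {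
  nterm : nat;
  nnt : nat;
  isAnd : nat -> bool;
  start : nat;
  and_ch : nat -> seq symbol;
  and_rel : nat -> seq P -> bool;
  and_fun : nat -> seq P -> P;
  or_rules : seq (nat * symbol * R)
}.

Section AOG.
Variables (P : Type) (R : realFieldType) (G : aog P R).

Definition sym_ok (s : symbol) : bool :=
  match s with inl a => (a < nterm G)%N | inr k => (k < nnt G)%N end.

Definition or_prob_sum (k : nat) : R :=
  \sum_(r <- or_rules G | r.1.1 == k) r.2.

Definition stochastic_aog : Prop :=
  [/\ (start G < nnt G)%N,
      (forall k, (k < nnt G)%N -> isAnd G k ->
         (2 <= size (and_ch G k))%N /\ all sym_ok (and_ch G k)),
      (forall r, r \in or_rules G ->
         [/\ (r.1.1 < nnt G)%N, ~~ isAnd G r.1.1, sym_ok r.1.2 & 0 <= r.2]) &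
      (forall k, (k < nnt G)%N -> ~~ isAnd G k -> or_prob_sum k = 1)].

Definition aog_size : nat :=
  nterm G + nnt G
  + \sum_(k < nnt G | isAnd G k) (size (and_ch G k)).+1
  + 2 * size (or_rules G).

(* parse trees: terminal instance (a, theta), an And-node instance with its
   children, or an Or-node instance using the Or-rule with index r *)
Inductive ptree :=
  | PT of nat & P
  | PA of nat & seq ptree
  | PO of nat & nat & ptree.

Definition psym (t : ptree) : symbol :=
  match t with PT a _ => inl a | PA A _ => inr A | PO o _ _ => inr o end.

Fixpoint param (t : ptree) : P :=
  match t with
  | PT _ th => th
  | PA A ch => and_fun G A (map param ch)
  | PO _ _ c => param c
  end.

Fixpoint pleaves (t : ptree) : seq (nat * P) :=
  match t with
  | PT a th => [:: (a, th)]
  | PA _ ch => flatten (map pleaves ch)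
  | PO _ _ c => pleaves c
  end.

Definition or_rule0 : nat * symbol * R := (0%N, inl 0%N, 0).

Fixpoint pvalid (t : ptree) : bool :=
  match t with
  | PT a _ => (a < nterm G)%N
  | PA A ch => [&& (A < nnt G)%N, isAnd G A, map psym ch == and_ch G A,
                 and_rel G A (map param ch) & all id (map pvalid ch)]
  | PO o r c => [&& (o < nnt G)%N, ~~ isAnd G o, (r < size (or_rules G))%N,
                 (nth or_rule0 (or_rules G) r).1.1 == o,
                 (nth or_rule0 (or_rules G) r).1.2 == psym c & pvalid c]
  end.

Fixpoint pprob (t : ptree) : R :=
  match t with
  | PT _ _ => 1
  | PA _ ch => foldr *%R 1 (map pprob ch)
  | PO _ r c => (nth or_rule0 (or_rules G) r).2 * pprob c
  end.

(* t is a parse of the data sample s (a multiset of terminal instances) *)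
Definition is_parse (s : seq (nat * P)) (t : ptree) : Prop :=
  [/\ pvalid t, psym t = inr (start G) & Permutation.Permutation (pleaves t) s].

Definition parse_partial_sum (s : seq (nat * P)) (u : R) : Prop :=
  exists l : seq ptree, List.NoDup l /\ (forall t, List.In t l -> is_parse s t)
                        /\ u = \sum_(t <- l) pprob t.

(* v is the marginal probability of s: the sum over all its parses,
   i.e. the supremum of the finite partial sums *)
Definition aog_marginal (s : seq (nat * P)) (v : R) : Prop :=
  (forall u, parse_partial_sum s u -> u <= v) /\
  (forall w, (forall u, parse_partial_sum s u -> u <= w) -> v <= w).

End AOG.

(* The terminal node for literal x_i is 2i, for \bar x_i it is 2i+1. *)
Definition lit_term (d : nat) (i : 'I_d) (b : bool) : nat := (2 * i + ~~ b)%N.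

Definition sample_of (d : nat) (x : {ffun 'I_d -> bool}) : seq (nat * unit) :=
  [seq (lit_term i (x i), tt) | i <- enum 'I_d].

From HB Require Import structures.
From mathcomp Require Import all_boot all_order all_algebra.
From mathcomp Require Import zify ring.
From Stdlib Require Import Permutation.
Set Implicit Arguments. Unset Strict Implicit. Unset Printing Implicit Defensive.
Import Order.TTheory GRing.Theory Num.Theory.
Local Open Scope ring_scope.

(* The grammar has one terminal per literal and one nonterminal per SPN node.
   Product nodes with at least two children become And-nodes; every other node
   is an Or-node: a leaf rewrites to its literal, a one-child product to its
   child, and a sum node with weights w_c to child c with probability
   w_c Z_c / Z_k, where Z_k is the value of node k with every indicator set to 1.
   Going up the topological order one lists all valid parse trees rooted at
   each node k: by completeness and decomposability their leaves name every
   variable of the scope of k exactly once, and those consistent with a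
   valuation f of the indicators carry total probability S_k(f) / Z_k.  At the
   root, with f the assignment x, this is S(x) / Z; summing over all x shows
   that Z is the normalizing constant, so the marginal of the sample of x is
   the probability of x.  The grammar has O(|S|) symbols and rules because
   d never exceeds the number of leaves. *)

Section StdlibLists.
Variable T : eqType.
Implicit Types (x : T) (s t : seq T).

Lemma InP x s : reflect (List.In x s) (x \in s).
Proof.
elim: s => [|y s IH] /=; first by right.
rewrite in_cons eq_sym; apply: (iffP orP) => -[/eqP -> | /IH]; auto.
Qed.

Lemma NoDupP s : reflect (List.NoDup s) (uniq s).
Proof.
elim: s => [|y s IH] /=; first by left; constructor.
apply: (iffP andP) => [[/InP Hy /IH Hs] | /List.NoDup_cons_iff [Hy /IH Hs]].
- by constructor.
- by split => //; apply/InP.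
Qed.

Lemma Permutation_cons_cat x s t : Permutation (x :: s ++ t) (s ++ x :: t).
Proof.
elim: s => [|y s IH] //=.
exact: Permutation_trans (perm_swap y x _) (perm_skip y IH).
Qed.

Lemma PermutationP s t : reflect (Permutation s t) (perm_eq s t).
Proof.
apply: (iffP idP); last first.
  elim=> [|x s' t' _ IH|x y s'|s1 s2 s3 _ IH1 _ IH2].
  - exact: perm_refl.
  - by rewrite perm_cons.
  - by rewrite -[x :: s']cat1s -[y :: _]cat1s perm_catCA.
  - exact: seq.perm_trans IH1 IH2.
elim: s t => [|x s IH] t.
  by rewrite perm_sym => /perm_nilP ->.
move=> Hst; have Ht : x \in t by rewrite -(perm_mem Hst) mem_head.
move: Hst; case/splitPr: Ht => t1 t2 Hst.
have /IH Hs : perm_eq s (t1 ++ t2).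
  by rewrite -(perm_cons x); apply: seq.perm_trans Hst _; rewrite perm_catC /= perm_cons perm_catC.
exact: Permutation_trans (perm_skip x Hs) (Permutation_cons_cat x t1 t2).
Qed.

End StdlibLists.

Section ParseTrees.
Variable P : Type.
Local Notation tree := (ptree P).

Lemma ptree_nested_ind (Q : tree -> Prop) :
  (forall a th, Q (PT a th)) ->
  (forall A ch, List.Forall Q ch -> Q (PA A ch)) ->
  (forall o r c, Q c -> Q (PO o r c)) ->
  forall t, Q t.
Proof.
move=> HT HA HO; fix IH 1 => -[a th | A ch | o r c].
- exact: HT.
- apply: HA; elim: ch => [|t ch IHch]; by constructor.
- exact: HO.
Qed.

Lemma pprob_ge0 (R : realFieldType) (G : aog P R) t :
  stochastic_aog G -> pvalid G t -> 0 <= pprob G t.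
Proof.
case=> _ _ Hrules _; elim/ptree_nested_ind: t => //= [A ch Hch | o r c IH].
- case/and5P=> _ _ _ _; elim: Hch => //= t ch' Ht _ IHch /andP [/Ht Ht0 /IHch].
  exact: mulr_ge0.
- case/and5P=> _ _ Hr _ /andP [_ /IH Hc]; rewrite mulr_ge0 //.
  by have [] := Hrules _ (mem_nth (or_rule0 R) Hr).
Qed.

End ParseTrees.

Section ParseTreeEqType.
Variable P : eqType.
Local Notation tree := (ptree P).

Fixpoint ptree_code (t : tree) : GenTree.tree (nat + P) :=
  match t with
  | PT a th => GenTree.Node 0 [:: GenTree.Leaf (inl a); GenTree.Leaf (inr th)]
  | PA A ch => GenTree.Node 1 (GenTree.Leaf (inl A) :: map ptree_code ch)
  | PO o r c => GenTree.Node 2 [:: GenTree.Leaf (inl o); GenTree.Leaf (inl r); ptree_code c]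
  end.

Fixpoint ptree_decode (g : GenTree.tree (nat + P)) : option tree :=
  match g with
  | GenTree.Node 0 [:: GenTree.Leaf (inl a); GenTree.Leaf (inr th)] => Some (PT a th)
  | GenTree.Node 1 (GenTree.Leaf (inl A) :: ch) => Some (PA A (pmap ptree_decode ch))
  | GenTree.Node 2 [:: GenTree.Leaf (inl o); GenTree.Leaf (inl r); c] =>
      omap (PO o r) (ptree_decode c)
  | _ => None
  end.

Lemma ptree_codeK : pcancel ptree_code ptree_decode.
Proof.
elim/ptree_nested_ind => //= [A ch Hch | o r c -> //].
by congr (Some (PA A _)); elim: Hch => //= t ch' -> _ ->.
Qed.

HB.instance Definition _ := Equality.copy tree (pcan_type ptree_codeK).

End ParseTreeEqType.

Lemma aog_marginal_enum (P : eqType) (R : realFieldType) (G : aog P R) s Ts :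
  stochastic_aog G -> uniq Ts -> (forall t, t \in Ts <-> is_parse G s t) ->
  aog_marginal G s (\sum_(t <- Ts) pprob G t).
Proof.
move=> stochG UTs HTs; split => [u [l [/NoDupP Ul [Hl ->]]] | w Hw].
- have sub_l : {subset l <= Ts} by move=> t /InP /Hl /HTs.
  rewrite (perm_big [seq t <- Ts | t \in l]) /=; last first.
    apply: uniq_perm; rewrite ?filter_uniq // => t.
    by rewrite mem_filter andb_idr // => /sub_l.
  rewrite big_filter [leLHS]big_mkcond /= big_seq [leRHS]big_seq ler_sum // => t Ht.
  by case: ifP => // _; case/HTs: Ht => Hv _ _; exact: pprob_ge0.
- by apply: Hw; exists Ts; split; [exact/NoDupP | split => // t /InP /HTs].
Qed.

Section PrefixFold.
Variables (A B : Type) (F : seq A -> B -> A).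

Definition prefix_fold (s : seq B) : seq A :=
  foldl (fun acc n => rcons acc (F acc n)) [::] s.

Lemma prefix_fold_rcons s n :
  prefix_fold (rcons s n) = rcons (prefix_fold s) (F (prefix_fold s) n).
Proof. by rewrite /prefix_fold foldl_rcons. Qed.

Lemma size_prefix_fold s : size (prefix_fold s) = size s.
Proof. by elim/last_ind: s => // s n IH; rewrite prefix_fold_rcons !size_rcons IH. Qed.

Lemma nth_prefix_fold a0 b0 s k : (k < size s)%N ->
  nth a0 (prefix_fold s) k = F (prefix_fold (take k s)) (nth b0 s k).
Proof.
elim/last_ind: s => // s n IH; rewrite size_rcons ltnS leq_eqVlt.
rewrite prefix_fold_rcons nth_rcons size_prefix_fold -cats1 nth_cat.
case/orP=> [/eqP -> | Hk]; first by rewrite ltnn eqxx subnn take_size_cat.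
by rewrite Hk IH // takel_cat ?(ltnW Hk).
Qed.

Lemma nth_prefix_fold_take a0 s k c : (c < k)%N -> (c < size s)%N ->
  nth a0 (prefix_fold (take k s)) c = nth a0 (prefix_fold s) c.
Proof.
case: s => // b s' Hck Hcs.
have Hc' : (c < size (take k (b :: s')))%N by rewrite size_take; case: ifP.
rewrite (nth_prefix_fold a0 b Hc') (nth_prefix_fold a0 b Hcs) nth_take //.
by rewrite take_takel ?(ltnW Hck).
Qed.

End PrefixFold.

Section SPNEval.
Variables (R : realFieldType) (d : nat) (S : spn d R).
Hypothesis wfS : wf_spn S.
Local Notation nd0 := (SProd d R [::]).

Lemma wf_spn_node k : (k < size S)%N ->
  match nth nd0 S k with
  | SLeaf _ _ => True
  | SSum ch => [/\ ch != [::], {in ch, forall c, c.1 < k}%N & {in ch, forall c, 0 < c.2}]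
  | SProd ch => ch != [::] /\ {in ch, forall c, c < k}%N
  end.
Proof.
move=> Hk; have := (proj2 wfS) k Hk; case: (nth nd0 S k) => // ch.
  by case=> H1 [/allP H2 /allP H3]; rewrite -size_eq0 -lt0n.
by case=> H1 /allP H2; rewrite -size_eq0 -lt0n.
Qed.

Definition eval_node (f : 'I_d -> bool -> bool) (vs : seq R) (n : snode d R) : R :=
  match n with
  | SLeaf i b => (f i b)%:R
  | SSum ch => \sum_(c <- ch) c.2 * nth 0 vs c.1
  | SProd ch => \prod_(c <- ch) nth 0 vs c
  end.

Definition spn_eval f k : R := nth 0 (prefix_fold (eval_node f) S) k.

Lemma spn_val_eval x : spn_val S x = spn_eval (fun i b => x i == b) (size S).-1.
Proof. by rewrite /spn_val -nth_last size_prefix_fold. Qed.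

Lemma spn_evalE f k : (k < size S)%N ->
  spn_eval f k = match nth nd0 S k with
                 | SLeaf i b => (f i b)%:R
                 | SSum ch => \sum_(c <- ch) c.2 * spn_eval f c.1
                 | SProd ch => \prod_(c <- ch) spn_eval f c
                 end.
Proof.
move=> Hk; have := wf_spn_node Hk.
rewrite /spn_eval (nth_prefix_fold _ 0 nd0 Hk); case: (nth nd0 S k) => //= ch.
  case=> _ Hlt _; apply: eq_big_seq => c Hc; congr (_ * _).
  by apply: nth_prefix_fold_take; [apply: Hlt | apply: ltn_trans (Hlt c Hc) Hk].
case=> _ Hlt; apply: eq_big_seq => c Hc.
by apply: nth_prefix_fold_take; [apply: Hlt | apply: ltn_trans (Hlt c Hc) Hk].
Qed.

Lemma scope_ofE k : (k < size S)%N ->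
  scope_of S k = match nth nd0 S k with
                 | SLeaf i b => [set i]
                 | SSum ch => \bigcup_(c <- ch) scope_of S c.1
                 | SProd ch => \bigcup_(c <- ch) scope_of S c
                 end.
Proof.
move=> Hk; have := wf_spn_node Hk.
rewrite /scope_of /scopes (nth_prefix_fold _ set0 nd0 Hk); case: (nth nd0 S k) => //= ch.
  case=> _ Hlt _; rewrite big_map; apply: eq_big_seq => c Hc.
  by apply: nth_prefix_fold_take; [apply: Hlt | apply: ltn_trans (Hlt c Hc) Hk].
case=> _ Hlt; apply: eq_big_seq => c Hc.
by apply: nth_prefix_fold_take; [apply: Hlt | apply: ltn_trans (Hlt c Hc) Hk].
Qed.

Definition spn_mass k : R := spn_eval (fun _ _ => true) k.

Lemma spn_mass_gt0 k : (k < size S)%N -> 0 < spn_mass k.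
Proof.
elim/ltn_ind: k => k IH Hk; have := wf_spn_node Hk.
rewrite /spn_mass spn_evalE //; case: (nth nd0 S k) => [_ _ _ | ch | ch].
- exact: ltr01.
- case=> + Hlt Hw; case: ch Hlt Hw => // c ch Hlt Hw _.
  have Hpos c' : c' \in c :: ch -> 0 < c'.2 * spn_mass c'.1.
    by move=> Hc'; rewrite mulr_gt0 ?Hw // IH ?Hlt // (ltn_trans (Hlt c' Hc') Hk).
  rewrite big_cons (lt_le_trans (Hpos c (mem_head _ _))) // lerDl big_seq.
  by apply: sumr_ge0 => c' Hc'; rewrite ltW // Hpos // in_cons Hc' orbT.
- case=> _ Hlt; rewrite big_seq; apply: prodr_gt0 => c Hc.
  by rewrite IH ?Hlt // (ltn_trans (Hlt c Hc) Hk).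
Qed.

End SPNEval.

Definition lit_inst d (l : 'I_d * bool) : nat * unit := (lit_term l.1 l.2, tt).

Lemma lit_inst_inj d : injective (@lit_inst d).
Proof.
move=> [i b] [j c] [] /=; rewrite /lit_term => E.
have Eij : i = j :> nat by case: b c E => -[] /=; lia.
have Ebc : b = c by case: b c E => -[] /=; lia.
by rewrite Ebc (val_inj Eij).
Qed.

Section Grammar.
Variables (R : realFieldType) (d : nat) (S : spn d R).
Hypothesis wfS : wf_spn S.
Local Notation nd0 := (SProd d R [::]).
Local Notation mass := (spn_mass S).

(* Sum-node rules are reweighted by the child masses, which makes every
   Or-node normalized; single-child product nodes become Or-nodes, since an
   And-rule needs at least two children. *)
Definition node_rules k (n : snode d R) : seq (nat * symbol * R) :=
  match n with
  | SLeaf i b => [:: (k, inl (lit_term i b), 1)]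
  | SSum ch => [seq (k, inr c.1, c.2 * mass c.1 / mass k) | c <- ch]
  | SProd [:: c] => [:: (k, inr c, 1)]
  | SProd _ => [::]
  end.

Definition spn_or_rules : seq (nat * symbol * R) :=
  flatten [seq node_rules k (nth nd0 S k) | k <- iota 0 (size S)].

Definition spn_is_and k : bool :=
  if nth nd0 S k is SProd ch then (1 < size ch)%N else false.

Definition spn_and_ch k : seq symbol :=
  if nth nd0 S k is SProd ch then map inr ch else [::].

Definition spn_aog : aog unit R :=
  AOG (2 * d) (size S) spn_is_and (size S).-1 spn_and_ch
      (fun _ _ => true) (fun _ _ => tt) spn_or_rules.

Lemma node_rules_head k n r : r \in node_rules k n -> r.1.1 = k.
Proof.
case: n => [i b | ch | [|c [|c' ch]]] //=; rewrite ?inE.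
- by move/eqP ->.
- by case/mapP=> c _ ->.
- by move/eqP ->.
Qed.

Lemma mem_spn_or_rules r :
  r \in spn_or_rules -> (r.1.1 < size S)%N /\ r \in node_rules r.1.1 (nth nd0 S r.1.1).
Proof.
case/flattenP=> s /mapP [k Hk ->] Hr.
by rewrite (node_rules_head Hr); move: Hk; rewrite mem_iota.
Qed.

Lemma big_spn_or_rules (F : nat * symbol * R -> R) k : (k < size S)%N ->
  \sum_(r <- spn_or_rules | r.1.1 == k) F r = \sum_(r <- node_rules k (nth nd0 S k)) F r.
Proof.
move=> Hk; rewrite big_flatten big_map (bigD1_seq k) ?mem_iota ?iota_uniq //=.
rewrite [X in _ + X]big1_seq ?addr0 => [|j /andP [Hj _]].
  rewrite big_seq_cond [RHS]big_seq; apply: eq_bigl => r.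
  by case Hr: (r \in _); rewrite ?andbT ?andbF // (node_rules_head Hr) eqxx.
rewrite big1_seq // => r /andP [/eqP Er /node_rules_head Er'].
by move: Hj; rewrite -Er Er' eqxx.
Qed.

Lemma spn_or_rules_props r : r \in spn_or_rules ->
  [/\ (r.1.1 < size S)%N, ~~ spn_is_and r.1.1,
      is_true (if r.1.2 is inr c then (c < r.1.1)%N else sym_ok spn_aog r.1.2) & 0 <= r.2].
Proof.
case/mem_spn_or_rules; move: r.1.1 => k Hk Hr; split => //;
  have := wf_spn_node wfS Hk; move: Hr; rewrite /spn_is_and;
  case: (nth nd0 S k) => [i b | ch | [|c [|c' ch]]] //=; rewrite ?inE.
all: try by move=> /eqP -> /=.
- move=> /eqP -> _ /=; rewrite /lit_term; have := ltn_ord i; case: b => /=; lia.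
- by case/mapP=> c Hc -> [_ Hlt _]; apply: Hlt.
- by move=> /eqP -> [_ Hlt]; apply: Hlt; rewrite mem_head.
- case/mapP=> c Hc -> [_ Hlt Hw] /=.
  by rewrite divr_ge0 ?mulr_ge0 ?ltW ?Hw ?spn_mass_gt0 // (ltn_trans (Hlt c Hc) Hk).
Qed.

Lemma spn_aog_stochastic : stochastic_aog spn_aog.
Proof.
split => /=.
- by case: (size S) (proj1 wfS).
- move=> k Hk; have := wf_spn_node wfS Hk; rewrite /spn_is_and /spn_and_ch.
  case: (nth nd0 S k) => // ch [_ Hlt] Hch; rewrite size_map all_map; split => //.
  by apply/allP => c Hc /=; rewrite (ltn_trans (Hlt c Hc) Hk).
- move=> r Hr; have [Hk HA Hs Hp] := spn_or_rules_props Hr; split => //.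
  by case: r.1.2 Hs => //= c Hc; rewrite (ltn_trans Hc Hk).
- move=> k Hk; rewrite /or_prob_sum /= (big_spn_or_rules (fun r => r.2)) //.
  have := spn_evalE wfS (fun _ _ => true) Hk; have := wf_spn_node wfS Hk.
  rewrite /spn_is_and; case: (nth nd0 S k) => [i b | ch | [|c [|c' ch]]] //=.
  + by move=> _ _ _; rewrite big_seq1.
  + move=> _ Hmass _; rewrite big_map -mulr_suml -Hmass divff //.
    by rewrite lt0r_neq0 // spn_mass_gt0.
  + by case.
  + by move=> _ _ _; rewrite big_seq1.
Qed.

End Grammar.

Section Cartesian.
Variable T : Type.

Fixpoint cart (Ls : seq (seq T)) : seq (seq T) :=
  if Ls is L :: Ls' then [seq t :: ts | t <- L, ts <- cart Ls'] else [:: [::]].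

Lemma big_cart (R : comPzSemiRingType) (P : pred T) (F : T -> R) Ls :
  \sum_(ts <- cart Ls | all P ts) \prod_(t <- ts) F t =
  \prod_(L <- Ls) \sum_(t <- L | P t) F t.
Proof.
elim: Ls => [|L Ls IH] /=; first by rewrite big_mkcond big_seq1 !big_nil.
rewrite big_cons big_mkcond big_allpairs_dep big_distrl -IH [RHS]big_mkcond /=.
apply: eq_bigr => t _; case: (P t) => /=.
- by rewrite big_distrr [RHS]big_mkcond; apply: eq_bigr => ts _; rewrite big_cons.
- by rewrite big1.
Qed.

End Cartesian.

Lemma mem_cart (T : eqType) (Ls : seq (seq T)) ts :
  (ts \in cart Ls) = all2 (fun t L => t \in L) ts Ls.
Proof.
elim: Ls ts => [|L Ls IH] [|t ts] //=.
  by apply/allpairsPdep => -[? [? []]].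
apply/allpairsPdep/andP => [[t' [ts' [Ht Hts [-> ->]]]] | [Ht Hts]].
  by rewrite -IH.
by exists t, ts; rewrite IH.
Qed.

Lemma cart_uniq (T : eqType) (Ls : seq (seq T)) :
  all uniq Ls -> uniq (cart Ls).
Proof.
elim: Ls => [|L Ls IH] //= /andP [UL /IH ULs].
by apply: allpairs_uniq => // -[? ?] [? ?] _ _ [-> ->].
Qed.

Section BigcupSeq.
Variables (d : nat) (X : eqType) (A : X -> {set 'I_d}).

Lemma mem_bigcup_seq i (s : seq X) :
  (i \in \bigcup_(c <- s) A c) = has (fun c => i \in A c) s.
Proof. by elim: s => [|x s IH]; rewrite ?big_nil ?in_set0 // big_cons in_setU IH. Qed.

Lemma bigcup_seq_const (B : {set 'I_d}) (s : seq X) :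
  s != [::] -> {in s, forall c, A c = B} -> \bigcup_(c <- s) A c = B.
Proof.
elim: s => [|x s IH] // _ HB; rewrite big_cons HB ?mem_head //.
have [-> | s0] := eqVneq s [::]; first by rewrite big_nil setU0.
by rewrite IH ?setUid // => c Hc; rewrite HB // in_cons Hc orbT.
Qed.

Lemma perm_flatten_enum_bigcup (s : seq X) (x0 : X) :
  (forall j1 j2, (j1 < size s)%N -> (j2 < size s)%N -> j1 <> j2 ->
     [disjoint A (nth x0 s j1) & A (nth x0 s j2)]) ->
  perm_eq (flatten [seq enum (A c) | c <- s]) (enum (\bigcup_(c <- s) A c)).
Proof.
move=> Hdisj; apply: uniq_perm; last 2 first.
- exact: enum_uniq.
- move=> i; rewrite mem_enum mem_bigcup_seq; apply/flattenP/hasP.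
  + by case=> _ /mapP [c Hc ->]; rewrite mem_enum; exists c.
  + by case=> c Hc Hi; exists (enum (A c)); [apply: map_f | rewrite mem_enum].
elim: s Hdisj => [|c s IH] Hdisj //=.
rewrite cat_uniq enum_uniq IH => [|j1 j2 H1 H2 H12]; last first.
  by apply: (Hdisj j1.+1 j2.+1) => // -[].
rewrite andbT /=; apply/hasP => -[i /flattenP [_ /mapP [c' Hc' ->]]].
rewrite !mem_enum => Hi' Hi.
have Hj : (index c' s < size s)%N by rewrite index_mem.
have := Hdisj 0%N (index c' s).+1 isT Hj (@O_S _).
by rewrite /= nth_index // => /disjointFr /(_ Hi); rewrite Hi'.
Qed.

End BigcupSeq.

Section ParseEnumeration.
Variables (R : realFieldType) (d : nat) (S : spn d R).
Hypotheses (wfS : wf_spn S) (cmpS : complete_spn S) (decS : decomposable_spn S).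
Local Notation nd0 := (SProd d R [::]).
Local Notation G := (spn_aog S).
Local Notation tree := (ptree unit).
Local Notation rule r := (nth (or_rule0 R) (spn_or_rules S) r).
Local Notation mass := (spn_mass S).

Definition consistent (f : 'I_d -> bool -> bool) (lv : seq (nat * unit)) : bool :=
  all (fun p => [exists l : 'I_d * bool, (p == lit_inst l) && f l.1 l.2]) lv.

Lemma consistent_lits f lits :
  consistent f (map (@lit_inst d) lits) = all (fun l => f l.1 l.2) lits.
Proof.
rewrite /consistent all_map; apply: eq_all => l /=; apply/existsP/idP.
- by case=> l' /andP [/eqP /lit_inst_inj <-].
- by move=> Hl; exists l; rewrite eqxx.
Qed.

Lemma consistent_flatten f lvs :
  consistent f (flatten lvs) = all (consistent f) lvs.
Proof. by elim: lvs => //= lv lvs IH; rewrite /consistent all_cat -IH. Qed.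

Definition literal_yield k (t : tree) : Prop :=
  exists2 lits, pleaves t = map (@lit_inst d) lits &
                perm_eq (map fst lits) (enum (scope_of S k)).

Definition parse_enum k (T : seq tree) : Prop :=
  [/\ uniq T,
      forall t, (t \in T) = pvalid G t && (psym t == inr k),
      {in T, forall t, literal_yield k t} &
      forall f, \sum_(t <- T | consistent f (pleaves t)) pprob G t =
                spn_eval S f k / mass k].

Definition sym_below k (s : symbol) : bool :=
  if s is inr c then (c < k)%N else sym_ok G s.

Definition sym_trees (L : seq (seq tree)) (s : symbol) : seq tree :=
  match s with inl a => [:: PT a tt] | inr c => nth [::] L c end.

Definition or_rule_indices k : seq nat :=
  [seq r <- iota 0 (size (spn_or_rules S)) | (rule r).1.1 == k].

Definition or_trees L k : seq tree :=
  [seq PO k r t | r <- or_rule_indices k, t <- sym_trees L (rule r).1.2].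

Definition and_trees L k : seq tree :=
  map (PA k) (cart (map (sym_trees L) (spn_and_ch S k))).

Definition node_trees L k : seq tree :=
  if spn_is_and S k then and_trees L k else or_trees L k.

Section Step.
Variables (L : seq (seq tree)) (k : nat).
Hypothesis ltkS : (k < size S)%N.
Hypothesis IH : forall c, (c < k)%N -> parse_enum c (nth [::] L c).

Lemma sym_trees_enum s : sym_below k s ->
  uniq (sym_trees L s) /\
  forall t, (t \in sym_trees L s) = pvalid G t && (psym t == s).
Proof.
case: s => [a Ha | c /IH []] //=; split => // -[a' [] | A ch | o r t] /=; rewrite inE.
- by apply/eqP/andP => [[->] | [_ /eqP [->]]].
- by apply/eqP/andP => [|[_ /eqP]].
- by apply/eqP/andP => [|[_ /eqP]].
Qed.

Lemma mem_or_rule_indices r :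
  (r \in or_rule_indices k) = (r < size (spn_or_rules S))%N && ((rule r).1.1 == k).
Proof. by rewrite mem_filter mem_iota andbC. Qed.

Lemma or_rule_sym r : r \in or_rule_indices k ->
  [/\ (r < size (spn_or_rules S))%N, (rule r).1.1 = k,
      rule r \in node_rules S k (nth nd0 S k) &
      sym_below k (rule r).1.2].
Proof.
rewrite mem_or_rule_indices => /andP [Hr /eqP Ek].
have Hm := mem_nth (or_rule0 R) Hr.
have [_ _ Hs _] := spn_or_rules_props wfS Hm; have [_ Hn] := mem_spn_or_rules Hm.
by rewrite Ek in Hs Hn; split.
Qed.

Lemma or_trees_uniq : uniq (or_trees L k).
Proof.
apply: allpairs_uniq_dep; first by rewrite filter_uniq ?iota_uniq.
- by move=> r /or_rule_sym [_ _ _ Hs]; have [] := sym_trees_enum Hs.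
- by move=> [r t] [r' t'] _ _ [-> ->].
Qed.

Lemma mem_or_trees t : ~~ spn_is_and S k ->
  (t \in or_trees L k) = pvalid G t && (psym t == inr k).
Proof.
move=> notA; apply/allpairsPdep/andP => [[r [t' [Hr Ht' ->]]] | []].
  have [Hrs Ek _ Hb] := or_rule_sym Hr; have [_ HT] := sym_trees_enum Hb.
  move: Ht'; rewrite HT => /andP [Hv /eqP Hs].
  by rewrite /= ltkS notA Hrs Ek Hs !eqxx Hv.
case: t => [a th | A ch | o r t'] //= + /eqP [E]; subst.
  by case/and4P=> _ HA; rewrite HA in notA.
case/and5P=> _ _ Hr Ek /andP [/eqP Hs Hv].
have Hr' : r \in or_rule_indices k by rewrite mem_or_rule_indices Hr Ek.
exists r, t'; split => //.
have [_ _ _ Hb] := or_rule_sym Hr'; have [_ ->] := sym_trees_enum Hb.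
by rewrite Hv Hs eqxx.
Qed.

Lemma or_trees_yield : {in or_trees L k, forall t, literal_yield k t}.
Proof.
move=> _ /allpairsPdep [r [t [Hr Ht ->]]]; have [_ _ Hm _] := or_rule_sym Hr.
rewrite /literal_yield /= (scope_ofE wfS ltkS); have := cmpS ltkS; have := wf_spn_node wfS ltkS.
move: Hm Ht; case: (nth nd0 S k) => [i b | ch | [|c [|c' ch]]] //=; rewrite ?inE.
- move=> /eqP -> /=; rewrite inE => /eqP -> _ _.
  by exists [:: (i, b)]; rewrite ?enum_set1.
- case/mapP=> c Hc -> /= Ht [_ Hlt _] Hcmp.
  have [_ _ Hy _] := IH (Hlt c Hc); have [lits E1 E2] := Hy t Ht.
  exists lits => //; rewrite (bigcup_seq_const (B := scope_of S c.1)) //.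
    by apply: contraTneq Hc => ->.
  by move=> c0 Hc0; exact: Hcmp.
- move=> /eqP -> /= Ht [_ Hlt] _.
  have [_ _ Hy _] := IH (Hlt c (mem_head _ _)); have [lits E1 E2] := Hy t Ht.
  by exists lits; rewrite ?big_seq1.
Qed.

Lemma sum_or_trees f : ~~ spn_is_and S k ->
  \sum_(t <- or_trees L k | consistent f (pleaves t)) pprob G t = spn_eval S f k / mass k.
Proof.
move=> notA; set g := fun rl : nat * symbol * R =>
  rl.2 * \sum_(t <- sym_trees L rl.1.2 | consistent f (pleaves t)) pprob G t.
have -> : \sum_(t <- or_trees L k | consistent f (pleaves t)) pprob G t =
          \sum_(rl <- spn_or_rules S | rl.1.1 == k) g rl.
  rewrite big_mkcond big_allpairs_dep big_filter [RHS](big_nth (or_rule0 R)).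
  rewrite /index_iota subn0; apply: eq_bigr => r _.
  by rewrite /g big_distrr [RHS]big_mkcond; apply: eq_bigr => t _; case: ifP; rewrite ?mulr0.
rewrite big_spn_or_rules // /g.
have := spn_evalE wfS f ltkS; have := spn_evalE wfS (fun _ _ => true) ltkS.
have := wf_spn_node wfS ltkS; move: notA; rewrite /spn_is_and /spn_mass.
case: (nth nd0 S k) => [i b | ch | [|c [|c' ch]]] //= _.
- move=> _ -> ->; rewrite big_seq1 /= mul1r divr1 big_mkcond big_seq1 /=.
  by have := consistent_lits f [:: (i, b)]; rewrite /= andbT => ->; case: (f i b).
- case=> _ Hlt _ _ ->; rewrite big_map mulr_suml; apply: eq_big_seq => c Hc /=.
  have [_ _ _ ->] := IH (Hlt c Hc).
  have Hmc : mass c.1 != 0 by rewrite lt0r_neq0 // spn_mass_gt0 // (ltn_trans (Hlt c Hc)).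
  have Hmk : mass k != 0 by rewrite lt0r_neq0 // spn_mass_gt0.
  by rewrite /spn_mass in Hmc Hmk *; field; rewrite Hmc Hmk.
- by case.
- case=> _ Hlt -> ->; rewrite !big_seq1 mul1r.
  by have [_ _ _ ->] := IH (Hlt c (mem_head _ _)).
Qed.

Lemma all2_sym_trees ts syms : {in syms, forall s, sym_below k s} ->
  all2 (fun t Ts => t \in Ts) ts (map (sym_trees L) syms) =
  (map (@psym unit) ts == syms) && all (pvalid G) ts.
Proof.
elim: syms ts => [|s syms IHs] [|t ts] //= Hb.
have [_ ->] := sym_trees_enum (Hb s (mem_head _ _)).
rewrite IHs => [|s' Hs']; last by rewrite Hb // in_cons Hs' orbT.
by rewrite eqseq_cons; case: (pvalid G t); case: (psym t == s); rewrite ?andbF.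
Qed.

Lemma and_ch_below : {in spn_and_ch S k, forall s, sym_below k s}.
Proof.
rewrite /spn_and_ch; have := wf_spn_node wfS ltkS.
by case: (nth nd0 S k) => // ch [_ Hlt] _ /mapP [c Hc ->]; exact: Hlt.
Qed.

Lemma and_trees_uniq : uniq (and_trees L k).
Proof.
rewrite map_inj_uniq => [|ts ts' [] //]; apply: cart_uniq.
by rewrite all_map; apply/allP => s /and_ch_below /sym_trees_enum [].
Qed.

Lemma mem_and_trees t : spn_is_and S k ->
  (t \in and_trees L k) = pvalid G t && (psym t == inr k).
Proof.
move=> isA; have Hb := and_ch_below.
apply/mapP/andP => [[ts Hts ->] | []].
  by move: Hts; rewrite mem_cart all2_sym_trees //= ltkS isA all_map.
case: t => [a th | A ch' | o r t'] //= + /eqP [E]; subst.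
- case/and4P=> _ _ Hs Hv; exists ch' => //.
  by rewrite mem_cart all2_sym_trees // Hs; rewrite all_map in Hv.
- by case/and5P=> _ /negP.
Qed.

Lemma literal_yield_flatten ts ch :
  all2 (fun t Ts => t \in Ts) ts (map (sym_trees L) (map inr ch)) ->
  {in ch, forall c, {in nth [::] L c, forall t, literal_yield c t}} ->
  exists2 lits, flatten (map (@pleaves unit) ts) = map (@lit_inst d) lits &
    perm_eq (map fst lits) (flatten [seq enum (scope_of S c) | c <- ch]).
Proof.
elim: ch ts => [|c ch IHch] [|t ts] //=; first by exists [::].
case/andP=> Ht Hts Hy.
have [l1 E1 P1] := Hy c (mem_head _ _) t Ht.
have [|l2 E2 P2] := IHch ts Hts => [c' Hc'|]; first by apply: Hy; rewrite in_cons Hc' orbT.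
by exists (l1 ++ l2); rewrite ?E1 ?E2 ?map_cat // perm_cat.
Qed.

Lemma and_trees_yield : spn_is_and S k -> {in and_trees L k, forall t, literal_yield k t}.
Proof.
move=> + _ /mapP [ts Hts ->]; rewrite /literal_yield /= (scope_ofE wfS ltkS).
move: Hts; rewrite /and_trees /spn_and_ch mem_cart; have := decS ltkS.
have := and_ch_below; rewrite /spn_is_and /spn_and_ch.
case: (nth nd0 S k) => // ch Hb Hdec Hts _.
have [|lits E1 E2] := literal_yield_flatten Hts.
  by move=> c Hc; have /IH [_ _ Hy _] := Hb (inr c) (map_f _ Hc); exact: Hy.
exists lits => //; apply: seq.perm_trans E2 _.
exact: (perm_flatten_enum_bigcup (x0 := 0%N)).
Qed.

Lemma sum_and_trees f : spn_is_and S k ->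
  \sum_(t <- and_trees L k | consistent f (pleaves t)) pprob G t = spn_eval S f k / mass k.
Proof.
move=> isA; rewrite big_map.
under eq_bigl do rewrite /= consistent_flatten all_map.
under eq_bigr do rewrite /= foldrE big_map.
rewrite big_cart big_map /spn_mass !(spn_evalE wfS _ ltkS); move: isA (and_ch_below).
rewrite /spn_is_and /spn_and_ch; case: (nth nd0 S k) => // ch _ Hb.
rewrite big_map -prodf_div; apply: eq_big_seq => c Hc.
by have /IH [_ _ _ ->] := Hb (inr c) (map_f _ Hc).
Qed.

Lemma parse_enum_node_trees : parse_enum k (node_trees L k).
Proof.
rewrite /node_trees; case: ifP => [isA | /negbT notA]; split.
- exact: and_trees_uniq.
- by move=> t; rewrite mem_and_trees.
- exact: and_trees_yield.
- by move=> f; rewrite sum_and_trees.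
- exact: or_trees_uniq.
- by move=> t; rewrite mem_or_trees.
- exact: or_trees_yield.
- by move=> f; rewrite sum_or_trees.
Qed.

End Step.

Lemma parse_enum_exists n : (n <= size S)%N ->
  exists L, forall c, (c < n)%N -> parse_enum c (nth [::] L c).
Proof.
elim: n => [|n IHn] Hn; first by exists [::].
have [L HL] := IHn (ltnW Hn).
exists (set_nth [::] L n (node_trees L n)) => c; rewrite ltnS nth_set_nth /=.
case: eqP => [-> _ | Hne Hc]; first exact: parse_enum_node_trees.
by apply: HL; rewrite ltn_neqAle Hc andbT; apply/eqP.
Qed.

End ParseEnumeration.

Lemma mem_pmap_map (aT : Type) (rT : eqType) (f : aT -> option rT) s u :
  (u \in pmap f s) = (Some u \in map f s).
Proof. by elim: s => //= x s IH; case: (f x) => [y|]; rewrite /= ?in_cons IH. Qed.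

Section Size.
Variables (R : realFieldType) (d : nat) (S : spn d R).
Hypotheses (wfS : wf_spn S) (fullS : full_scope_spn S).
Local Notation nd0 := (SProd d R [::]).

Definition leaf_var (n : snode d R) : option 'I_d :=
  if n is SLeaf i _ then Some i else None.

Lemma scope_sub_leaf_vars k : (k < size S)%N ->
  scope_of S k \subset [set i in pmap leaf_var S].
Proof.
elim/ltn_ind: k => k IH Hk; rewrite (scope_ofE wfS Hk).
have Hleaf : leaf_var (nth nd0 S k) \in map leaf_var S 
  by rewrite -(nth_map nd0 None leaf_var Hk) mem_nth ?size_map.
have sub_bigcup (X : eqType) (A : X -> {set 'I_d}) (s : seq X) :
    {in s, forall c, A c \subset [set i in pmap leaf_var S]} ->
    \bigcup_(c <- s) A c \subset [set i in pmap leaf_var S].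
  move=> HA; apply/subsetP => i; rewrite mem_bigcup_seq => /hasP [c Hc].
  exact/subsetP/HA.
move: Hleaf (wf_spn_node wfS Hk); case: (nth nd0 S k) => [i b | ch | ch] Hleaf.
- by rewrite sub1set inE mem_pmap_map.
- case=> _ Hlt _; apply: sub_bigcup => c Hc.
  by rewrite IH ?Hlt // (ltn_trans (Hlt c Hc) Hk).
- case=> _ Hlt; apply: sub_bigcup => c Hc.
  by rewrite IH ?Hlt // (ltn_trans (Hlt c Hc) Hk).
Qed.

Lemma num_vars_le_size : (d <= size S)%N.
Proof.
have Hroot : ((size S).-1 < size S)%N by case: (size S) (proj1 wfS).
have := subset_leq_card (scope_sub_leaf_vars Hroot).
rewrite [scope_of _ _]fullS cardsT card_ord => /leq_trans; apply.
by rewrite cardsE (leq_trans (card_size _)) // size_pmap count_size.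
Qed.

Lemma spn_size_nodes :
  (\sum_(k < size S) (size (node_children (nth nd0 S k))).+1)%N = spn_size S.
Proof.
under eq_bigr do rewrite -add1n.
by rewrite big_split /= sum1_card card_ord /spn_size (big_nth nd0) big_mkord.
Qed.

Lemma spn_aog_size : (aog_size (spn_aog S) <= 6 * spn_size S)%N.
Proof.
rewrite /aog_size /=.
have Hand : (\sum_(k < size S | spn_is_and S k) (size (spn_and_ch S k)).+1 <= spn_size S)%N.
  rewrite -spn_size_nodes big_mkcond leq_sum // => k _; rewrite /spn_is_and /spn_and_ch.
  by case: (nth nd0 S k) => // ch; case: ifP; rewrite ?size_map.
have Hrules : (size (spn_or_rules S) <= spn_size S)%N.
  rewrite -spn_size_nodes size_flatten sumnE /shape !big_map.
  rewrite -(big_mkord xpredT (fun k => (size (node_children (nth nd0 S k))).+1)).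
  rewrite /index_iota subn0; apply: leq_sum => k _.
  by case: (nth nd0 S k) => [i b | ch | [|c [|c' ch]]] //=; rewrite !size_map.
have Hnodes : (size S <= spn_size S)%N by rewrite leq_addr.
move: Hand Hrules Hnodes num_vars_le_size.
move: (\sum_(k < _ | _) _)%N (size (spn_or_rules S)) (spn_size S) => A B C; lia.
Qed.

End Size.

Lemma perm_enum_assignment d (lits : seq ('I_d * bool)) :
  perm_eq (map fst lits) (enum [set: 'I_d]) ->
  exists y0 : {ffun 'I_d -> bool},
    forall y : {ffun 'I_d -> bool}, all (fun l => y l.1 == l.2) lits = (y == y0).
Proof.
move=> Hperm; set vs := map fst lits.
have Uvs : uniq vs by rewrite (perm_uniq Hperm) enum_uniq.
have Hvs i : i \in vs by rewrite (perm_mem Hperm) mem_enum in_setT.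
have Hidx i : (index i vs < size lits)%N by rewrite -(size_map fst) index_mem.
have Efst i : (nth (i, false) lits (index i vs)).1 = i.
  by rewrite -(nth_map _ i) ?nth_index.
exists [ffun i => (nth (i, false) lits (index i vs)).2] => y.
apply/allP/eqP => [Hy | -> l Hl].
  apply/ffunP => i; rewrite ffunE.
  by have /eqP := Hy _ (mem_nth (i, false) (Hidx i)); rewrite Efst.
have Hl' : (index l lits < size lits)%N by rewrite index_mem.
have El : nth l.1 vs (index l lits) = l.1 by rewrite (nth_map l) // nth_index.
by rewrite ffunE -{2}El index_uniq ?size_map // nth_index.
Qed.

Section Root.
Variables (R : realFieldType) (d : nat) (S : spn d R).
Hypotheses (wfS : wf_spn S) (fullS : full_scope_spn S).
Variable T : seq (ptree unit).
Hypothesis HT : parse_enum S (size S).-1 T.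
Local Notation G := (spn_aog S).
Local Notation root := (size S).-1.
Local Notation consistent_with x := (consistent (fun i b => x i == b)).

Lemma root_yield t : t \in T ->
  exists2 lits, pleaves t = map (@lit_inst d) lits & perm_eq (map fst lits) (enum [set: 'I_d]).
Proof. by case: HT => _ _ Hy _ /Hy [lits E]; rewrite [scope_of _ _]fullS; exists lits. Qed.

Lemma root_consistent_unique t : t \in T ->
  exists y0 : {ffun 'I_d -> bool},
    forall y : {ffun 'I_d -> bool}, consistent_with y (pleaves t) = (y == y0).
Proof.
case/root_yield=> lits -> /perm_enum_assignment [y0 Hy0].
by exists y0 => y; rewrite consistent_lits.
Qed.

Lemma sum_spn_val : \sum_y spn_val S y = spn_mass S root.
Proof.
have Hm : spn_mass S root != 0.
  by rewrite lt0r_neq0 // spn_mass_gt0 //; case: (size S) (proj1 wfS).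
have [_ _ _ Hsum] := HT.
have Hone : \sum_(t <- T) pprob G t = 1.
  have := Hsum (fun _ _ => true); rewrite -[spn_eval _ _ _]/(spn_mass S root) divff // => <-.
  rewrite big_seq_cond [RHS]big_seq_cond; apply: eq_bigl => t.
  case Ht: (t \in T) => //=; have [lits -> _] := root_yield Ht.
  by rewrite consistent_lits; apply/esym/allP.
have : \sum_y spn_val S y / spn_mass S root = 1.
  under eq_bigr do rewrite spn_val_eval -Hsum big_mkcond.
  rewrite exchange_big /= -Hone; apply: eq_big_seq => t /root_consistent_unique [y0 Hy0].
  by under eq_bigr do rewrite Hy0; rewrite -big_mkcond big_pred1_eq.
by rewrite -mulr_suml => /(canRL (divfK Hm)); rewrite mul1r.
Qed.

Lemma spn_prob_parses (x : {ffun 'I_d -> bool}) :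
  spn_prob S x = \sum_(t <- T | consistent_with x (pleaves t)) pprob G t.
Proof. by have [_ _ _ ->] := HT; rewrite /spn_prob sum_spn_val spn_val_eval. Qed.

Lemma parse_of_sample (x : {ffun 'I_d -> bool}) t :
  t \in [seq t <- T | consistent_with x (pleaves t)] <-> is_parse G (sample_of x) t.
Proof.
have [_ HTmem _ _] := HT; rewrite mem_filter; split.
- case/andP=> Hc Ht; have := Ht; rewrite HTmem => /andP [Hv /eqP Hs]; split => //.
  have [lits E Hperm] := root_yield Ht; rewrite E consistent_lits in Hc *.
  have -> : map (@lit_inst d) lits = [seq (lit_term i (x i), tt) | i <- map fst lits].
    rewrite -map_comp; apply/eq_in_map => -[i b] Hib /=.
    by move/allP: Hc => /(_ _ Hib) /= /eqP ->.
  by apply/PermutationP/perm_map; rewrite enum_setT -enumT in Hperm.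
- case=> Hv Hs /PermutationP Hp; rewrite HTmem Hv Hs /= eqxx andbT.
  apply/allP => p; rewrite (perm_mem Hp) => /mapP [i _ ->].
  by apply/existsP; exists (i, x i); rewrite !eqxx.
Qed.

End Root.

Theorem mainTheorem9 :
  exists c : nat,
    forall (R : realFieldType) (d : nat) (S : spn d R),
      wf_spn S -> complete_spn S -> decomposable_spn S -> full_scope_spn S ->
      exists G : aog unit R,
        [/\ stochastic_aog G,
            (aog_size G <= c * spn_size S)%N &
            forall x : {ffun 'I_d -> bool},
              aog_marginal G (sample_of x) (spn_prob S x)].
Proof.
exists 6%N => R d S wfS cmpS decS fullS.
have Hroot : ((size S).-1 < size S)%N by case: (size S) (proj1 wfS).
have [L /(_ _ Hroot) HT] := parse_enum_exists wfS cmpS decS (leqnn (size S)).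
exists (spn_aog S); split.
- exact: spn_aog_stochastic.
- exact: spn_aog_size.
- move=> x; rewrite (spn_prob_parses wfS fullS HT) -big_filter.
  apply: aog_marginal_enum; first exact: spn_aog_stochastic.
    by rewrite filter_uniq //; case: HT.
  exact: parse_of_sample.
Qed.
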